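(* Let $G$ be a 5-vertex-critical $(P_5,\text{chair})$-free graph that is not isomorphic to any graph in $\mathcal{F}=\{K_5,W,P,Q_1,Q_2,Q_3\}$, and let $C=v_1v_2v_3v_4v_5v_1$ be an induced $C_5$ in $G$. Then $|S_4(i)|\le 6$ for all $1\le i\le 5$.
   Context: All graphs are finite and simple; $P_5$ is the path on 5 vertices; the chair is a $P_4$ plus a vertex adjacent to exactly one of the two middle vertices of the $P_4$; ''$H$-free'' means no induced subgraph isomorphic to $H$; $G$ is $k$-vertex-critical if $\chi(G)=k$ and $\chi(G-v)<k$ for all $v$. Indices modulo 5. $S_4(i)=\{v\in V(G)\setminus V(C): N(v)\cap V(C)=\{v_{i-2},v_{i-1},v_{i+1},v_{i+2}\}\}$. The graphs of $\mathcal{F}$ (other than $K_5$) are given by adjacency lists on vertex sets $\{0,\dots,n-1\}$: $W$: 0:1 4 5 6; 1:0 2 5 6; 2:1 3 5 6; 3:2 4 5 6; 4:0 3 5 6; 5:0 1 2 3 4 6; 6:0 1 2 3 4 5. $P$: 0:1 4 5 6; 1:0 2 7 8; 2:1 3 5 6 7 8; 3:2 4 5 6 7 8; 4:0 3 7 8; 5:0 2 3 7; 6:0 2 3 8; 7:1 2 3 4 5 8; 8:1 2 3 4 6 7. $Q_1$: 0:1 4 5 6; 1:0 2 5 6 7 8; 2:1 3 5 6 7 8; 3:2 4 7 8; 4:0 3 7 8; 5:0 1 2 6 7; 6:0 1 2 5 8; 7:1 2 3 4 5; 8:1 2 3 4 6. $Q_2$: 0:1 4 5 6; 1:0 2 5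 6 7 8; 2:1 3 5 6 7 8; 3:2 4 5 6 7 8; 4:0 3 7 8; 5:0 2 3 6 7; 6:0 2 3 5 8; 7:1 2 3 4 5; 8:1 2 3 4 6. $Q_3$: 0:1 4 5 6; 1:0 2 5 7 8; 2:1 3 5 7 8; 3:2 4 6 7 8; 4:0 3 6 7 8; 5:0 1 2 6; 6:0 3 4 5 8; 7:1 2 3 4 8; 8:1 2 3 4 6 7. *)

From mathcomp Require Import all_boot.
Set Implicit Arguments. Unset Strict Implicit. Unset Printing Implicit Defensive.

(* A finite simple graph is a symmetric irreflexive relation e on a finType T. *)

Definition colorable_on (T : finType) (e : rel T) (A : {set T}) (k : nat) : bool :=
  [exists c : {ffun T -> 'I_k},
     [forall x, forall y, ((x \in A) && (y \in A) && e x y) ==> (c x != c y)]].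

(* chromatic number of G[A]: least k with a proper k-colouring
   (k = #|T| colours always suffice, so the search range is enough) *)
Definition chi_on (T : finType) (e : rel T) (A : {set T}) : nat :=
  find (colorable_on e A) (iota 0 #|T|.+1).

Definition chi (T : finType) (e : rel T) : nat := chi_on e setT.

Definition vertex_critical (k : nat) (T : finType) (e : rel T) : Prop :=
  chi e = k /\ forall v : T, chi_on e (~: [set v]) < k.

Definition induced_copy (n : nat) (eH : rel 'I_n) (T : finType) (e : rel T) : Prop :=
  exists f : 'I_n -> T, injective f /\ forall i j, e (f i) (f j) = eH i j.

Definition H_free (n : nat) (eH : rel 'I_n) (T : finType) (e : rel T) : Prop :=
  ~ induced_copy eH e.

Definition isomorphic (n : nat) (eH : rel 'I_n) (T : finType) (e : rel T) : Prop :=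
  exists f : 'I_n -> T, bijective f /\ forall i j, e (f i) (f j) = eH i j.

Definition adj_rel (n : nat) (l : seq (seq nat)) : rel 'I_n :=
  fun i j => (nat_of_ord j) \in nth [::] l i.
Arguments adj_rel n l : clear implicits.

Definition P5_rel : rel 'I_5 :=
  fun i j => (i.+1 == j :> nat) || (j.+1 == i :> nat).

(* chair: path 0-1-2-3 plus vertex 4 adjacent to 1 *)
Definition chair_rel : rel 'I_5 :=
  adj_rel 5 [:: [:: 1]; [:: 0; 2; 4]; [:: 1; 3]; [:: 2]; [:: 1]].

Definition K5_rel : rel 'I_5 := fun i j => i != j.

Definition W_rel : rel 'I_7 := adj_rel 7
  [:: [:: 1;4;5;6]; [:: 0;2;5;6]; [:: 1;3;5;6]; [:: 2;4;5;6]; [:: 0;3;5;6];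
      [:: 0;1;2;3;4;6]; [:: 0;1;2;3;4;5]].

Definition P_rel : rel 'I_9 := adj_rel 9
  [:: [:: 1;4;5;6]; [:: 0;2;7;8]; [:: 1;3;5;6;7;8]; [:: 2;4;5;6;7;8]; [:: 0;3;7;8];
      [:: 0;2;3;7]; [:: 0;2;3;8]; [:: 1;2;3;4;5;8]; [:: 1;2;3;4;6;7]].

Definition Q1_rel : rel 'I_9 := adj_rel 9
  [:: [:: 1;4;5;6]; [:: 0;2;5;6;7;8]; [:: 1;3;5;6;7;8]; [:: 2;4;7;8]; [:: 0;3;7;8];
      [:: 0;1;2;6;7]; [:: 0;1;2;5;8]; [:: 1;2;3;4;5]; [:: 1;2;3;4;6]].

Definition Q2_rel : rel 'I_9 := adj_rel 9
  [:: [:: 1;4;5;6]; [:: 0;2;5;6;7;8]; [:: 1;3;5;6;7;8]; [:: 2;4;5;6;7;8]; [:: 0;3;7;8];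
      [:: 0;2;3;6;7]; [:: 0;2;3;5;8]; [:: 1;2;3;4;5]; [:: 1;2;3;4;6]].

Definition Q3_rel : rel 'I_9 := adj_rel 9
  [:: [:: 1;4;5;6]; [:: 0;2;5;7;8]; [:: 1;3;5;7;8]; [:: 2;4;6;7;8]; [:: 0;3;6;7;8];
      [:: 0;1;2;6]; [:: 0;3;4;5;8]; [:: 1;2;3;4;8]; [:: 1;2;3;4;6;7]].

Definition in_F (T : finType) (e : rel T) : Prop :=
  isomorphic K5_rel e \/ isomorphic W_rel e \/ isomorphic P_rel e \/
  isomorphic Q1_rel e \/ isomorphic Q2_rel e \/ isomorphic Q3_rel e.

Definition C5_rel : rel 'I_5 :=
  fun i j => (j == (i.+1 %% 5) :> nat) || (i == (j.+1 %% 5) :> nat).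

Definition induced_C5 (T : finType) (e : rel T) (v : 'I_5 -> T) : Prop :=
  injective v /\ forall i j, e (v i) (v j) = C5_rel i j.

(* S_4(i): vertices outside C whose neighbours on C are exactly
   {v_(i-2), v_(i-1), v_(i+1), v_(i+2)} = all cycle vertices except v_i *)
Definition S4 (T : finType) (e : rel T) (v : 'I_5 -> T) (i : 'I_5) : {set T} :=
  [set x | [forall j, v j != x] && [forall j, e x (v j) == (j != i)]].

From mathcomp Require Import all_boot zify.

(* We show that the set S of vertices adjacent to every
   cycle vertex except v0 has at most 4 elements, which gives |S4(i)| <= 4
   (hence <= 6) for every i after rotating the cycle.

   Criticality is only used through one consequence: every proper subgraph
   G - u is 4-colourable.  Hence G - u contains no K5 and no C5 joined to an
   edge, and there is no homomorphism G -> G - u; in particular no vertex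
   neighbourhood is contained in another one ("folding").  Combining these
   facts with P5- and chair-freeness we show that G[S] has maximum degree at
   most 1, has no induced 2K2 and has at most two isolated vertices, so
   |S| <= 2 + 2.  The file first develops colourings and the general
   consequences of criticality, then forbidden induced subgraphs, then the
   analysis of S, and finally the rotation giving the theorem. *)

Set Implicit Arguments. Unset Strict Implicit. Unset Printing Implicit Defensive.

Section Colourings.
Variables (T : finType) (e : rel T).

Lemma chi_on_le (A : {set T}) : chi_on e A <= #|T|.+1.
Proof. by rewrite -[X in _ <= X](size_iota 0) find_size. Qed.

Lemma chi_on_min (A : {set T}) (k : nat) : colorable_on e A k -> chi_on e A <= k.
Proof.
move=> col; rewrite leqNgt; apply/negP => lt_k.
have := before_find 0 lt_k; rewrite nth_iota ?add0n ?col //.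
exact: leq_trans lt_k (chi_on_le A).
Qed.

Lemma colorable_chi_on (A : {set T}) :
  chi_on e A <= #|T| -> colorable_on e A (chi_on e A).
Proof.
move=> le_chi; have has_col : has (colorable_on e A) (iota 0 #|T|.+1).
  by rewrite has_find size_iota.
by have := nth_find 0 has_col; rewrite nth_iota ?add0n.
Qed.

Lemma colorable_widen (A : {set T}) (k m : nat) :
  k <= m -> colorable_on e A k -> colorable_on e A m.
Proof.
move=> le_km /existsP [c /forallP proper]; apply/existsP.
exists [ffun x => widen_ord le_km (c x)]; apply/forallP => x; apply/forallP => y.
by rewrite !ffunE; apply: (forallP (proper x) y).
Qed.

End Colourings.

(* Among four colours, if two are used by p and q, any path a - b - c
   avoiding them alternates between the two remaining colours. *)
Lemma third_colour (p q a b c : 'I_4) :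
  p != q -> a != p -> a != q -> b != p -> b != q -> c != p -> c != q ->
  a != b -> b != c -> a = c.
Proof.
case: p q a b c => [p ?] [q ?] [a ?] [b ?] [c ?]; rewrite -!val_eqE /= => *.
by apply: val_inj => /=; lia.
Qed.

Lemma distinct_by_neighbour (T : finType) (e : rel T) (x y z : T) :
  e x z -> ~~ e y z -> x != y.
Proof. by move=> xz; apply: contraNneq => <-. Qed.

Section CriticalGraphs.
Variables (T : finType) (e : rel T).
Hypotheses (e_sym : symmetric e) (e_irr : irreflexive e).
Hypothesis crit : vertex_critical 5 e.

Lemma critical_colouring (u : T) :
  exists c : T -> 'I_4, forall x y, x != u -> y != u -> e x y -> c x != c y.
Proof.
have le_chi : chi_on e (~: [set u]) <= #|T|.
  by rewrite -ltnS; apply: leq_trans (crit.2 u) _; rewrite -crit.1 chi_on_le.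
have /(@colorable_widen _ e _ _ 4 (crit.2 u)) /existsP [c /forallP proper] :=
  colorable_chi_on le_chi.
exists c => x y xu yu exy.
by have := forallP (proper x) y; rewrite !inE xu yu exy.
Qed.

Lemma not_4colourable (c : T -> 'I_4) : ~ (forall x y, e x y -> c x != c y).
Proof.
move=> proper; suff : chi e <= 4 by rewrite crit.1.
apply: chi_on_min; apply/existsP; exists [ffun x => c x].
by apply/forallP => x; apply/forallP => y; apply/implyP => /andP [_ /proper]; rewrite !ffunE.
Qed.

Lemma no_hom_avoiding (u : T) (g : T -> T) :
  (forall x y, e x y -> e (g x) (g y)) -> (forall x, g x != u) -> False.
Proof.
move=> hom avoid; have [c proper] := critical_colouring u.
by apply: (@not_4colourable (c \o g)) => x y /hom; apply: proper.
Qed.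

Lemma no_clique_avoiding (u : T) (s : seq T) :
  u \notin s -> 4 < size s -> pairwise e s -> False.
Proof.
move=> us big cliq; have [c proper] := critical_colouring u.
have : uniq (map c s).
  rewrite uniq_pairwise pairwise_map.
  apply: (sub_in_pairwise (P := mem s)) cliq; last exact/allP.
  by move=> x y xs ys exy /=; apply: proper exy; apply: contraNneq us => <-.
move/card_uniqP; rewrite size_map => card_cs.
by have := max_card (mem (map c s)); rewrite card_cs card_ord leqNgt big.
Qed.

Lemma no_double_wheel_avoiding (u c1 c2 c3 c4 c5 d1 d2 : T) :
  u \notin [:: c1; c2; c3; c4; c5; d1; d2] ->
  e c1 c2 -> e c2 c3 -> e c3 c4 -> e c4 c5 -> e c5 c1 -> e d1 d2 ->
  e d1 c1 -> e d1 c2 -> e d1 c3 -> e d1 c4 -> e d1 c5 ->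
  e d2 c1 -> e d2 c2 -> e d2 c3 -> e d2 c4 -> e d2 c5 -> False.
Proof.
rewrite !inE !negb_or ![u == _]eq_sym => /and3P [h1 h2 /and5P [h3 h4 h5 hd1 hd2]].
move=> e12 e23 e34 e45 e51 edd a1 a2 a3 a4 a5 b1 b2 b3 b4 b5.
have [c proper] := critical_colouring u.
have hub1 x : x != u -> e d1 x -> c x != c d1.
  by move=> xu dx; rewrite eq_sym; apply: proper.
have hub2 x : x != u -> e d2 x -> c x != c d2.
  by move=> xu dx; rewrite eq_sym; apply: proper.
have dd := proper _ _ hd1 hd2 edd.
have c13 := third_colour dd (hub1 _ h1 a1) (hub2 _ h1 b1) (hub1 _ h2 a2) (hub2 _ h2 b2)
  (hub1 _ h3 a3) (hub2 _ h3 b3) (proper _ _ h1 h2 e12) (proper _ _ h2 h3 e23).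
have c35 := third_colour dd (hub1 _ h3 a3) (hub2 _ h3 b3) (hub1 _ h4 a4) (hub2 _ h4 b4)
  (hub1 _ h5 a5) (hub2 _ h5 b5) (proper _ _ h3 h4 e34) (proper _ _ h4 h5 e45).
by have := proper _ _ h5 h1 e51; rewrite -c35 -c13 eqxx.
Qed.

(* No neighbourhood of a vertex is contained in that of another vertex,
   since otherwise identifying them would map G into G - x. *)
Lemma no_dominated_vertex (x y : T) :
  x != y -> (forall w, e w x -> e w y) -> False.
Proof.
move=> xy dom; apply: (no_hom_avoiding (u := x) (g := fun w => if w == x then y else w)).
  move=> u w uw; case: (eqVneq u x) => [ux|ux]; case: (eqVneq w x) => [wx|wx].
  - by rewrite ux wx e_irr in uw.
  - by rewrite e_sym; apply: dom; rewrite -ux e_sym.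
  - by apply: dom; rewrite -wx.
  - exact: uw.
by move=> w; case: (eqVneq w x) => [_|//]; rewrite eq_sym.
Qed.

Lemma private_neighbour (x y : T) : x != y -> exists2 w, e w x & ~~ e w y.
Proof.
move=> xy; apply/exists_inP; apply: contraT; rewrite negb_exists_in => /forall_inP dom.
by case: (no_dominated_vertex xy) => w /dom; rewrite negbK.
Qed.

Lemma no_edge_fold (x p y q : T) :
  e x p -> e y q -> y != x -> q != x ->
  (forall w, e w x -> w != p -> e w y) -> (forall w, e w p -> w != x -> e w q) -> False.
Proof.
move=> xp yq yx qx Nx Np.
pose g w := if w == x then y else if w == p then q else w.
have px : p != x by apply: contraTneq xp => ->; rewrite e_irr.
have moved u w : e u w -> w != x -> w != p -> e (g u) w.
  move=> uw wx wp; rewrite /g.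
  case: (eqVneq u x) => [ux|_]; last case: (eqVneq u p) => [up|//].
    by rewrite e_sym; apply: Nx => //; rewrite -ux e_sym.
  by rewrite e_sym; apply: Np => //; rewrite -up e_sym.
apply: (no_hom_avoiding (u := x) (g := g)); last first.
  by move=> w; rewrite /g; case: (eqVneq w x) => // wx; case: (eqVneq w p).
have g_id w : w != x -> w != p -> g w = w by rewrite /g => /negbTE-> /negbTE->.
move=> u w uw; case: (boolP ((w == x) || (w == p))) => [wxp|]; last first.
  by rewrite negb_or => /andP [wx wp]; rewrite (g_id w wx wp) moved.
case: (boolP ((u == x) || (u == p))) => [uxp|]; last first.
  by rewrite negb_or => /andP [ux up]; rewrite (g_id u ux up) e_sym moved // e_sym.
move: uw; rewrite /g; case/orP: uxp => /eqP ->; case/orP: wxp => /eqP ->.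
- by rewrite e_irr.
- by rewrite !eqxx (negbTE px).
- by rewrite !eqxx (negbTE px) => _; rewrite e_sym.
- by rewrite e_irr.
Qed.

End CriticalGraphs.

Lemma matched_le2 (T : finType) (r : rel T) (B : {set T}) :
  symmetric r ->
  (forall x y z, x \in B -> y \in B -> z \in B -> r x y -> r x z -> y = z) ->
  (forall x p y q, x \in B -> p \in B -> y \in B -> q \in B -> r x p -> r y q ->
     ~~ r x y -> ~~ r x q -> ~~ r p y -> ~~ r p q -> False) ->
  #|[set x in B | [exists y in B, r x y]]| <= 2.
Proof.
move=> r_sym deg no2K2; rewrite leqNgt; apply/negP.
move=> /card_gt2P [x [y [z [[Mx My Mz] [xy yz zx]]]]].
have matched u :
    u \in [set x in B | [exists y in B, r x y]] -> u \in B /\ exists2 w, w \in B & r u w.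
  by rewrite inE => /andP [Bu /exists_inP].
have [Bx [p Bp xp]] := matched x Mx.
have [w [Mw wx wp]] :
    exists w, [/\ w \in [set x in B | [exists y in B, r x y]], w != x & w != p].
  case: (eqVneq y p) => [yp|yp]; last by exists y; rewrite eq_sym.
  by exists z; rewrite zx -yp eq_sym.
have [Bw [q Bq wq]] := matched w Mw.
have px : r p x by rewrite r_sym.
apply: (no2K2 x p w q) => //; apply/negP.
- by move=> xw; move: wp; rewrite (deg _ _ _ Bx Bp Bw xp xw) eqxx.
- move=> xq; rewrite -(deg _ _ _ Bx Bp Bq xp xq) in wq.
  by move: wx; rewrite (deg _ _ _ Bp Bx Bw px) ?eqxx // r_sym.
- by move=> pw; move: wx; rewrite (deg _ _ _ Bp Bx Bw px pw) eqxx.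
- move=> pq; rewrite -(deg _ _ _ Bp Bx Bq px pq) in wq.
  by move: wp; rewrite (deg _ _ _ Bx Bp Bw xp) ?eqxx // r_sym.
Qed.

Section ForbiddenSubgraphs.
Variables (T : finType) (e : rel T).
Hypotheses (e_sym : symmetric e) (e_irr : irreflexive e).
Hypotheses (P5free : H_free P5_rel e) (chair_free : H_free chair_rel e).

Local Ltac edge := solve [ done | by rewrite e_sym | by apply/negbTE
  | by rewrite e_sym; apply/negbTE | by rewrite e_irr ].

Local Ltac clash :=
  match goal with
  | h : is_true (?x != ?x) |- _ => by rewrite eqxx in h
  | h : is_true (e ?x ?x) |- _ => by rewrite e_irr in h
  | h1 : is_true (e ?x ?y), h2 : is_true (~~ e ?x ?y) |- _ => by rewrite h1 in h2
  | h1 : is_true (e ?x ?y), h2 : is_true (~~ e ?y ?x) |- _ => by rewrite e_sym h1 in h2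
  end.

Local Ltac distinct_vertices :=
  rewrite /= !inE !negb_or !andbT;
  repeat match goal with |- is_true (_ && _) => apply/andP; split end;
  apply/eqP => xy; subst; clash.

Lemma induced_copy5 (R : rel 'I_5) (a b c d f : T) :
  uniq [:: a; b; c; d; f] ->
  (forall i j : 'I_5, e (nth a [:: a; b; c; d; f] i) (nth a [:: a; b; c; d; f] j) = R i j) ->
  induced_copy R e.
Proof.
move=> s_uniq pattern; exists (fun i => nth a [:: a; b; c; d; f] i); split => // i j.
by move/eqP; rewrite nth_uniq // => /eqP /val_inj.
Qed.

Lemma no_P5 (a b c d f : T) :
  e a b -> e b c -> e c d -> e d f -> ~~ e a c -> ~~ e a d -> ~~ e a f ->
  ~~ e b d -> ~~ e b f -> ~~ e c f -> False.
Proof.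
move=> ab bc cd df ac ad af bd bf cf; apply: P5free.
apply: (induced_copy5 (a := a) (b := b) (c := c) (d := d) (f := f)).
  by distinct_vertices.
by move=> [[|[|[|[|[|?]]]]] ?] [[|[|[|[|[|?]]]]] ?] //=; edge.
Qed.

(* No five vertices induce a chair: the path a - b - c - d with a pendant
   vertex f at b (a and f are twins in the chair, so a != f is needed). *)
Lemma no_chair (a b c d f : T) :
  a != f -> e a b -> e b c -> e c d -> e b f -> ~~ e a c -> ~~ e a d -> ~~ e a f ->
  ~~ e b d -> ~~ e c f -> ~~ e d f -> False.
Proof.
move=> af ab bc cd bf ac ad naf bd cf df; apply: chair_free.
apply: (induced_copy5 (a := a) (b := b) (c := c) (d := d) (f := f)).
  by distinct_vertices.
by move=> [[|[|[|[|[|?]]]]] ?] [[|[|[|[|[|?]]]]] ?] //=; edge.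
Qed.

End ForbiddenSubgraphs.

Section CycleNeighbourhood.
Variables (T : finType) (e : rel T).
Hypotheses (e_sym : symmetric e) (e_irr : irreflexive e).
Hypothesis crit : vertex_critical 5 e.
Hypotheses (P5free : H_free P5_rel e) (chair_free : H_free chair_rel e).

(* The facts used about the induced 5-cycle v0 v1 v2 v3 v4. *)
Variables v0 v1 v2 v3 v4 : T.
Hypotheses (e01 : e v0 v1) (e12 : e v1 v2) (e23 : e v2 v3) (e40 : e v4 v0).
Hypotheses (n02 : ~~ e v0 v2) (n03 : ~~ e v0 v3) (n13 : ~~ e v1 v3) (n24 : ~~ e v2 v4).

Local Ltac edge := solve [ done | by rewrite e_sym ].
Local Notation P5 := (no_P5 e_sym e_irr P5free).
Local Notation chair := (no_chair e_sym e_irr chair_free).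

Definition inS (x : T) : bool := [&& ~~ e x v0, e x v1, e x v2, e x v3 & e x v4].

Lemma nbr_v2_neq_v0 (x : T) : e x v2 -> x != v0.
Proof. by move=> xv2; apply: distinct_by_neighbour xv2 n02. Qed.

Lemma v2_neq_v0 : v2 != v0.
Proof. by apply: distinct_by_neighbour e23 n03. Qed.

(* The neighbourhood of v2 contains no K4 (with v2 it would be a K5 in G - v0). *)
Lemma no_K4_at_v2 (a b c d : T) :
  e a v2 -> e b v2 -> e c v2 -> e d v2 ->
  e a b -> e a c -> e a d -> e b c -> e b d -> e c d -> False.
Proof.
move=> a2 b2 c2 d2 ab ac ad bc bd cd.
apply: (no_clique_avoiding crit (u := v0) (s := [:: a; b; c; d; v2])) => //.
  by rewrite !inE !negb_or ![v0 == _]eq_sym v2_neq_v0 !nbr_v2_neq_v0.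
by rewrite /= ab ac ad a2 bc bd b2 cd c2 d2.
Qed.

Lemma nbr_separating_S (x y w : T) :
  inS x -> inS y -> ~~ e x y -> e w x -> ~~ e w y ->
  inS w \/ [/\ e w v0, e w v2 & e w v3].
Proof.
move=> /and5P [x0 x1 x2 x3 x4] /and5P [y0 y1 y2 y3 y4] xy wx wy.
have [w0 | w0] := boolP (e w v0).
  right; split => //; apply/negPn/negP => wv.
    by apply: (P5 (a := v0) (b := w) (c := x) (d := v2) (f := y)); edge.
  by apply: (P5 (a := v0) (b := w) (c := x) (d := v3) (f := y)); edge.
left; have yv0 : y != v0 := distinct_by_neighbour y2 n02.
have v0w : v0 != w by rewrite eq_sym (distinct_by_neighbour wx) // e_sym.
have w1 : e w v1.
  apply/negPn/negP => wv; apply: (chair (a := y) (b := v1) (c := x) (d := w) (f := v0)); edge.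
have w4 : e w v4.
  apply/negPn/negP => wv; apply: (chair (a := y) (b := v4) (c := x) (d := w) (f := v0)); edge.
have w2 : e w v2.
  apply/negPn/negP => wv; apply: (chair (a := v0) (b := v4) (c := y) (d := v2) (f := w)); edge.
have w3 : e w v3.
  apply/negPn/negP => wv; apply: (chair (a := v0) (b := v1) (c := y) (d := v3) (f := w)); edge.
by apply/and5P.
Qed.

Lemma nbr_v0v2_sees_S (x y a : T) :
  inS x -> inS y -> x != y -> ~~ e x y -> e a v0 -> e a v2 -> ~~ e a x -> e a y.
Proof.
move=> /and5P [x0 x1 x2 x3 x4] /and5P [y0 y1 y2 y3 y4] xy nxy a0 a2 ax.
by apply/negPn/negP => ay; apply: (chair (a := x) (b := v2) (c := a) (d := v0) (f := y)); edge.
Qed.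

Lemma S_private_nbr (x y z : T) :
  inS x -> inS y -> inS z -> e x y -> e x z -> y != z -> ~~ e y z ->
  exists w, [/\ inS w, e w y, ~~ e w z & ~~ e w x].
Proof.
move=> Sx Sy Sz xy xz yz nyz; have [w wy wz] := private_neighbour e_sym e_irr crit yz.
have Sw := nbr_separating_S Sy Sz nyz wy wz.
have [w2 w3] : e w v2 /\ e w v3 by case: Sw => [/and5P [] | []].
move: Sx Sy Sz => /and5P [x0 x1 x2 x3 x4] /and5P [y0 y1 y2 y3 y4] /and5P [z0 z1 z2 z3 z4].
have wx : ~~ e w x.
  by apply/negP => wx; apply: (no_K4_at_v2 (a := w) (b := x) (c := y) (d := v3)); edge.
exists w; split => //; case: Sw => // [[w0 _ _]].
by exfalso; apply: (P5 (a := v0) (b := w) (c := y) (d := x) (f := z)); edge.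
Qed.

Lemma S_degree_le1 (x y z : T) : inS x -> inS y -> inS z -> e x y -> e x z -> y = z.
Proof.
move=> Sx Sy Sz xy xz; case: (eqVneq y z) => // yz; exfalso.
have [yzE | nyz] := boolP (e y z).
  move: Sx Sy Sz => /and5P [_ x1 x2 _ _] /and5P [_ y1 y2 _ _] /and5P [_ z1 z2 _ _].
  by apply: (no_K4_at_v2 (a := x) (b := y) (c := z) (d := v1)); edge.
have [w1 [S1 w1y w1z w1x]] := S_private_nbr Sx Sy Sz xy xz yz nyz.
have [w2 [S2 w2z w2y w2x]] : exists w, [/\ inS w, e w z, ~~ e w y & ~~ e w x].
  by apply: S_private_nbr => //; rewrite 1?eq_sym 1?e_sym.
move: Sx Sy Sz S1 S2.
move=> /and5P [_ x1 x2 _ _] /and5P [_ y1 y2 _ _] /and5P [_ z1 z2 _ _].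
move=> /and5P [_ a1 a2 _ _] /and5P [_ b1 b2 _ _].
have [w12 | nw12] := boolP (e w1 w2).
  apply: (no_double_wheel_avoiding crit (u := v0) (c1 := w1) (c2 := y) (c3 := x)
    (c4 := z) (c5 := w2) (d1 := v1) (d2 := v2)); try edge.
  by rewrite !inE !negb_or ![v0 == _]eq_sym v2_neq_v0 !nbr_v2_neq_v0.
by apply: (P5 (a := w1) (b := y) (c := x) (d := z) (f := w2)); edge.
Qed.

Lemma S_isolated_private (x y : T) :
  inS x -> inS y -> x != y -> ~~ e x y -> (forall w, inS w -> ~~ e x w) ->
  exists a, [/\ e a x, ~~ e a y, e a v0, e a v2 & e a v3].
Proof.
move=> Sx Sy xy nxy iso; have [a ax ay] := private_neighbour e_sym e_irr crit xy.
case: (nbr_separating_S Sx Sy nxy ax ay) => [Sa | [a0 a2 a3]]; last by exists a.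
by move: (iso a Sa); rewrite e_sym ax.
Qed.

Lemma S_isolated_le2 (x y z : T) :
  inS x -> inS y -> inS z -> x != y -> y != z -> z != x ->
  (forall w, inS w -> ~~ e x w) -> (forall w, inS w -> ~~ e y w) ->
  (forall w, inS w -> ~~ e z w) -> False.
Proof.
move=> Sx Sy Sz xy yz zx isox isoy isoz.
have [nxy nyz nzx] := And3 (isox y Sy) (isoy z Sz) (isoz x Sx).
have [a1 [a1x a1y a10 a12 a13]] := S_isolated_private Sx Sy xy nxy isox.
have a1z := nbr_v0v2_sees_S Sy Sz yz nyz a10 a12 a1y.
have [a2 [a2y a2x a20 a22 a23]] : exists a, [/\ e a y, ~~ e a x, e a v0, e a v2 & e a v3].
  by apply: S_isolated_private => //; rewrite 1?eq_sym 1?e_sym.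
have a2z : e a2 z by apply: (nbr_v0v2_sees_S Sx Sz) => //; rewrite 1?eq_sym 1?e_sym.
move: Sx Sy Sz => /and5P [x0 _ _ _ _] /and5P [y0 _ _ _ _] /and5P [_ _ z2 z3 _].
have [a12E | na12] := boolP (e a1 a2).
  by apply: (no_K4_at_v2 (a := a1) (b := a2) (c := z) (d := v3)); edge.
by apply: (P5 (a := x) (b := a1) (c := v0) (d := a2) (f := y)); edge.
Qed.

(* Beside an induced 2K2 x p, y q inside S, no vertex sees v0, v2 and v3:
   it would see x or y, and p or q, creating a K4 in the neighbourhood of v2. *)
Lemma no_v0v2v3_nbr_beside_2K2 (x p y q a : T) :
  inS x -> inS p -> inS y -> inS q -> e x p -> e y q ->
  ~~ e x y -> ~~ e x q -> ~~ e p y -> ~~ e p q ->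
  e a v0 -> e a v2 -> e a v3 -> False.
Proof.
move=> Sx Sp Sy Sq xp yq nxy nxq npy npq a0 a2 a3.
have yx : y != x := distinct_by_neighbour yq nxq.
have yp : y != p := distinct_by_neighbour yq npq.
have qx : q != x by apply: (distinct_by_neighbour (e := e) (z := y)) => //; rewrite e_sym.
have qp : q != p by apply: (distinct_by_neighbour (e := e) (z := y)) => //; rewrite e_sym.
have sees u w : inS u -> inS w -> u != w -> ~~ e u w -> ~~ e a u -> e a w.
  by move=> Su Sw uw nuw; apply: nbr_v0v2_sees_S.
have [_ _ x2 x3 _] := and5P Sx; have [_ _ p2 p3 _] := and5P Sp.
have [_ _ y2 y3 _] := and5P Sy; have [_ _ q2 q3 _] := and5P Sq.
have ay : e a y.
  apply/negPn/negP => ay.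
  have ax : e a x by apply: (sees y) => //; rewrite e_sym.
  have ap : e a p by apply: (sees y) => //; rewrite e_sym.
  by apply: (no_K4_at_v2 (a := a) (b := x) (c := p) (d := v3)); edge.
have aq : e a q.
  apply/negPn/negP => aq.
  have ax : e a x by apply: (sees q) => //; rewrite e_sym.
  have ap : e a p by apply: (sees q) => //; rewrite e_sym.
  by apply: (no_K4_at_v2 (a := a) (b := x) (c := p) (d := v3)); edge.
by apply: (no_K4_at_v2 (a := a) (b := y) (c := q) (d := v3)); edge.
Qed.

(* G[S] contains no induced 2K2: otherwise folding the edge x p onto the
   edge y q would map G into G - x. *)
Lemma S_no_induced_2K2 (x p y q : T) :
  inS x -> inS p -> inS y -> inS q -> e x p -> e y q ->
  ~~ e x y -> ~~ e x q -> ~~ e p y -> ~~ e p q -> False.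
Proof.
move=> Sx Sp Sy Sq xp yq nxy nxq npy npq.
have no_v023 := no_v0v2v3_nbr_beside_2K2 Sx Sp Sy Sq xp yq nxy nxq npy npq.
apply: (no_edge_fold e_sym e_irr crit xp yq).
- exact: distinct_by_neighbour yq nxq.
- by apply: (distinct_by_neighbour (e := e) (z := y)) => //; rewrite e_sym.
- move=> w wx wp; apply/negPn/negP => wy.
  case: (nbr_separating_S Sx Sy nxy wx wy) => [Sw | [w0 w2 w3]]; last exact: no_v023 w0 w2 w3.
  by move: wp; rewrite (S_degree_le1 Sx Sp Sw xp) ?eqxx // e_sym.
- move=> w wp wx; apply/negPn/negP => wq.
  case: (nbr_separating_S Sp Sq npq wp wq) => [Sw | [w0 w2 w3]]; last exact: no_v023 w0 w2 w3.
  by move: wx; rewrite (S_degree_le1 Sp Sx Sw) ?eqxx // e_sym.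
Qed.

(* Hence |S| <= 4: at most two isolated and at most two matched vertices. *)
Lemma card_S : #|[set x | inS x]| <= 4.
Proof.
set A := [set x | inS x]; set M := [set x in A | [exists y in A, e x y]].
rewrite -(cardsID M A) (_ : 4 = 2 + 2) //; apply: leq_add.
  apply: leq_trans (subset_leq_card (subsetIr A M)) _.
  apply: matched_le2 e_sym _ _ => [x y z | x p y q]; rewrite !inE.
    exact: S_degree_le1.
  exact: S_no_induced_2K2.
rewrite leqNgt; apply/negP => /card_gt2P [x [y [z [[Ix Iy Iz] [xy yz zx]]]]].
have isolated u : u \in A :\: M -> inS u /\ forall w, inS w -> ~~ e u w.
  rewrite !inE => /andP [+ Su]; rewrite Su /= => /exists_inP noM; split => // w Sw.
  by apply/negP => uw; apply: noM; exists w; rewrite ?inE.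
have [Sx isox] := isolated x Ix; have [Sy isoy] := isolated y Iy.
have [Sz isoz] := isolated z Iz.
exact: (S_isolated_le2 Sx Sy Sz xy yz zx isox isoy isoz).
Qed.

End CycleNeighbourhood.

(* Rotating the cycle so that v_i plays the role of v0: S4(i) lies in the
   set S of the rotated cycle, so it has at most 4 elements. *)
Lemma S4_card_le4 (T : finType) (e : rel T) (e_sym : symmetric e) (e_irr : irreflexive e)
  (crit : vertex_critical 5 e) (P5free : H_free P5_rel e) (chair_free : H_free chair_rel e)
  (v : 'I_5 -> T) (Hv : forall a b, e (v a) (v b) = C5_rel a b) (i : 'I_5) :
  #|S4 e v i| <= 4.
Proof.
pose w k := v (iter k (@ordS 5) i).
have sub : S4 e v i \subset [set x | inS e (w 0) (w 1) (w 2) (w 3) (w 4) x].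
  apply/subsetP => x; rewrite !inE => /andP [_ /forallP adj].
  have adjE k : e x (v k) = (k != i) by apply/eqP.
  by rewrite /inS /w !adjE; case: i {adj adjE w} => [[|[|[|[|[|?]]]]] ?].
apply: leq_trans (subset_leq_card sub) _.
by apply: card_S => //; rewrite /w Hv; case: i {sub w} => [[|[|[|[|[|?]]]]] ?].
Qed.

Theorem mainTheorem17 (T : finType) (e : rel T)
  (e_sym : symmetric e) (e_irr : irreflexive e)
  (Hcrit : vertex_critical 5 e)
  (HP5 : H_free P5_rel e) (Hchair : H_free chair_rel e)
  (HnotF : ~ in_F e)
  (v : 'I_5 -> T) (HC : induced_C5 e v) :
  forall i : 'I_5, #|S4 e v i| <= 6.
Proof.
by move=> i; apply: leq_trans (S4_card_le4 e_sym e_irr Hcrit HP5 Hchair HC.2 i) _.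
Qed.
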